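(* Let $(X,u)$ and $(Y,v)$ be Čech closure spaces, let $Y^X$ be the set of all continuous maps $(X,u)\to(Y,v)$, and let $\mathcal A$ be a collection of compact subsets of $(X,u)$. Then the $\mathcal A$-topology on $Y^X$ is proper.
   Context: A Čech closure space $(X,u)$ is a set $X$ with an operator $u:\mathcal P(X)\to\mathcal P(X)$ satisfying $u(\emptyset)=\emptyset$, $A\subset u(A)$, and $u(A\cup B)=u(A)\cup u(B)$. The interior is $\mathrm{int}_u A=X\setminus u(X\setminus A)$; $U$ is a neighbourhood of $x$ if $x\in\mathrm{int}_uU$. A map $f:(X,u)\to(Y,v)$ is continuous if $f(u(A))\subset v(f(A))$ for all $A$. A family $\{G_\alpha\}$ is an interior cover of $A\subset X$ if $A\subset\bigcup_\alpha\mathrm{int}_uG_\alpha$; $A$ is compact if every interior cover of $A$ has a finite subfamily covering $A$. Let $\mathcal V=\{V\subset Y:\mathrm{int}_vV\ne\emptyset\}$ and for $A\subset X$, $V\subset Y$ let $(A,V)=\{f\in Y^X: f(A)\subset V\}$. The $\mathcal A$-topology is the topology on $Y^X$ generated by the subbase $\{(A,V): A\in\mathcal A,\ V\in\mathcal V,\ V=\mathrm{int}_vV\}$. The product $(Z,w)\times(X,u)$ is $Z\times X$ with the closure operator for which the sets $W\times U$ ($W$ a neighbourhood of $z$, $U$ of $x$) form a neighbourhood base at $(z,x)$; for $g:Z\times X\to Y$, $g^*(z)(x)=g(z,x)$. A topology on $Y^X$ (regarded as its Kuratowski closure operator $\sigma$) is proper if for every closure space $(Z,w)$, continuity of $g:(Z,w)\times(X,u)\to(Y,v)$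 implies continuity of $g^*:(Z,w)\to(Y^X,\sigma)$. *)

From mathcomp Require Import all_boot.
From mathcomp Require Import boolp classical_sets cardinality.
Set Implicit Arguments. Unset Strict Implicit. Unset Printing Implicit Defensive.
Local Open Scope classical_set_scope.

Definition cech_closure (X : Type) (u : set X -> set X) : Prop :=
  [/\ u set0 = set0, (forall A, A `<=` u A) &
      (forall A B, u (A `|` B) = u A `|` u B)].

Definition cinterior (X : Type) (u : set X -> set X) (A : set X) : set X :=
  ~` u (~` A).

Definition cnbhd (X : Type) (u : set X -> set X) (x : X) (U : set X) : Prop :=
  cinterior u U x.

Definition ccontinuous (X Y : Type) (u : set X -> set X) (v : set Y -> set Y)
  (f : X -> Y) : Prop :=
  forall A, f @` (u A) `<=` v (f @` A).

Definition interior_cover (X : Type) (u : set X -> set X) (G : set (set X))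
  (A : set X) : Prop :=
  A `<=` \bigcup_(U in G) cinterior u U.

Definition ccompact (X : Type) (u : set X -> set X) (A : set X) : Prop :=
  forall G : set (set X), interior_cover u G A ->
    exists F : set (set X), [/\ finite_set F, F `<=` G & A `<=` \bigcup_(U in F) U].

(* Product closure: the W x U (W nbhd of z, U nbhd of x) form a nbhd base. *)
Definition prod_closure (Z X : Type) (w : set Z -> set Z) (u : set X -> set X)
  (S : set (Z * X)) : set (Z * X) :=
  [set p | forall W U, cnbhd w p.1 W -> cnbhd u p.2 U ->
             exists q, [/\ S q, W q.1 & U q.2]].

Definition cfun (X Y : Type) (u : set X -> set X) (v : set Y -> set Y) :=
  {f : X -> Y | ccontinuous u v f}.

Definition Atop_subbase (X Y : Type) (u : set X -> set X) (v : set Y -> set Y)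
  (calA : set (set X)) : set (set (@cfun X Y u v)) :=
  [set S | exists (A : set X) (V : set Y),
     [/\ calA A, cinterior v V !=set0, V = cinterior v V &
         S = [set f : @cfun X Y u v | (proj1_sig f) @` A `<=` V]]].

Definition gen_open (T : Type) (sb : set (set T)) (O : set T) : Prop :=
  forall f, O f -> exists F : set (set T),
    [/\ finite_set F, F `<=` sb, (\bigcap_(S in F) S) f &
        \bigcap_(S in F) S `<=` O].

Definition gen_closure (T : Type) (sb : set (set T)) (B : set T) : set T :=
  [set f | forall O, gen_open sb O -> O f -> O `&` B !=set0].

Definition Atop_closure (X Y : Type) (u : set X -> set X) (v : set Y -> set Y)
  (calA : set (set X)) : set (@cfun X Y u v) -> set (@cfun X Y u v) :=
  gen_closure (@Atop_subbase X Y u v calA).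

Definition proper_topology (X Y : Type) (u : set X -> set X) (v : set Y -> set Y)
  (sigma : set (@cfun X Y u v) -> set (@cfun X Y u v)) : Prop :=
  forall (Z : Type) (w : set Z -> set Z), cech_closure w ->
  forall g : Z * X -> Y, ccontinuous (prod_closure w u) v g ->
    exists gs : Z -> @cfun X Y u v,
      (forall z x, sval (gs z) x = g (z, x)) /\ ccontinuous w sigma gs.

Arguments cfun : clear implicits.
Arguments Atop_subbase : clear implicits.
Arguments Atop_closure : clear implicits.
Arguments proper_topology : clear implicits.

(* The product closure makes [g] continuous at each point (z, x): a basic
   neighbourhood [W `*` U] is mapped into any open [V] around [g (z, x)].  If
   [g (z, .)] maps a compact [A] into [V], finitely many such [U] cover [A],
   and the intersection of the corresponding [W] is a neighbourhood of [z]
   all of whose points [b] still satisfy [g (b, .) @` A `<=` V].  So the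
   preimage under [z |-> g (z, .)] of every subbasic open set is a
   neighbourhood of each of its points, which is continuity into the
   generated topology. *)
From mathcomp Require Import all_boot.
From mathcomp Require Import boolp classical_sets cardinality.

Set Implicit Arguments.
Unset Strict Implicit.
Unset Printing Implicit Defensive.
Local Open Scope classical_set_scope.

Definition cnear (T : Type) (c : set T -> set T) (t : T) (P : set T) : Prop :=
  exists2 W, cnbhd c t W & W `<=` P.

Section CechClosureSpace.
Variables (T : Type) (c : set T -> set T).
Hypothesis hc : cech_closure c.

Lemma ccl_mono (A B : set T) : A `<=` B -> c A `<=` c B.
Proof.
case: hc => _ _ clU sAB; rewrite -((setUidPr A B).2 sAB) clU.
by move=> t cAt; left.
Qed.

Lemma cnbhd_mem t W : cnbhd c t W -> W t.
Proof.
by case: hc => _ clext _ ctW; apply: contrapT => Wt; apply: ctW; exact: clext.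
Qed.

Lemma cnbhdT t : cnbhd c t setT.
Proof. by case: hc => cl0 _ _; rewrite /cnbhd /cinterior setCT cl0. Qed.

Lemma cnbhdI t W1 W2 : cnbhd c t W1 -> cnbhd c t W2 -> cnbhd c t (W1 `&` W2).
Proof. by case: hc => _ _ clU; rewrite /cnbhd /cinterior setCI clU => ? ? []. Qed.

Lemma ccl_meet_cnbhd t B W : c B t -> cnbhd c t W -> B `&` W !=set0.
Proof.
move=> cBt ctW; apply: contrapT => BW0; apply: ctW.
apply: (ccl_mono _ cBt) => b Bb Wb; apply: BW0; by exists b.
Qed.

Lemma cnear_all_finite (I : Type) (F : set I) (P : I -> set T) t :
  finite_set F -> (forall i, F i -> cnear c t (P i)) ->
  cnear c t [set b | forall i, F i -> P i b].
Proof.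
elim/Peq: I => I in F P *.
move=> /finite_seqP [s ->]; elim: s => [|i s IHs] nearP.
  by exists setT => [|b _ j /=]; [exact: cnbhdT | rewrite in_nil].
have [W1 ctW1 W1P] := nearP i (mem_head i s).
have [|W2 ctW2 W2P] := IHs.
  by move=> j sj; apply: nearP; rewrite /= in_cons sj orbT.
exists (W1 `&` W2); first exact: cnbhdI.
move=> b [W1b W2b] j /=; rewrite in_cons => /orP[/eqP -> | sj].
  exact: W1P.
exact: W2P.
Qed.

End CechClosureSpace.

Lemma ccontinuous_comp (T1 T2 T3 : Type) (c1 : set T1 -> set T1)
    (c2 : set T2 -> set T2) (c3 : set T3 -> set T3) (f : T1 -> T2) (h : T2 -> T3) :
  ccontinuous c1 c2 f -> ccontinuous c2 c3 h -> ccontinuous c1 c3 (h \o f).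
Proof.
move=> cf ch A _ [x c1Ax <-]; rewrite -image_comp.
exact/ch/imageP/cf/imageP.
Qed.

Lemma ccontinuous_cinterior (T Y : Type) (c : set T -> set T)
    (v : set Y -> set Y) (f : T -> Y) (V : set Y) :
  cech_closure v -> ccontinuous c v f ->
  f @^-1` cinterior v V `<=` cinterior c (f @^-1` V).
Proof.
move=> hv cf t intVt; rewrite /cinterior preimage_setC => cVt; apply: intVt.
by apply: (ccl_mono hv _ (cf _ _ (imageP f cVt))) => _ [b ? <-].
Qed.

Section ProductClosure.
Variables (Z X : Type) (w : set Z -> set Z) (u : set X -> set X).

Lemma prod_cinteriorP (S : set (Z * X)) z x :
  cinterior (prod_closure w u) S (z, x) ->
  exists W U, [/\ cnbhd w z W, cnbhd u x U & W `*` U `<=` S].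
Proof.
move=> /existsNP [W /existsNP [U /not_implyP [ctW /not_implyP [cxU noS]]]].
exists W, U; split=> // -[b a] [Wb Ua]; apply: contrapT => Sba.
by apply: noS; exists (b, a).
Qed.

Lemma ccontinuous_pair z :
  cech_closure w -> cech_closure u -> ccontinuous u (prod_closure w u) (pair z).
Proof.
move=> hw hu A _ [x uAx <-] W U /= ctW cxU.
have [a [Aa Ua]] := ccl_meet_cnbhd hu uAx cxU.
by exists (z, a); split => //; [exists a | exact: cnbhd_mem hw _ _ ctW].
Qed.

Lemma compact_tube (S : set (Z * X)) (A : set X) z :
  cech_closure w -> ccompact u A ->
  (forall x, A x -> cinterior (prod_closure w u) S (z, x)) ->
  cnear w z [set b | forall a, A a -> S (b, a)].
Proof.
move=> hw cptA intS.
pose G := [set U | cnear w z [set b | forall a, U a -> S (b, a)]].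
have [|F [finF FG coverA]] := cptA G.
  move=> x Ax; have [W [U [ctW cxU WUS]]] := prod_cinteriorP (intS x Ax).
  by exists U => //; exists W => // b Wb a Ua; apply: WUS.
have [W ctW WF] := cnear_all_finite hw finF FG.
exists W => // b Wb a Aa; have [U FU Ua] := coverA a Aa.
exact: WF b Wb U FU a Ua.
Qed.

End ProductClosure.

Lemma ccontinuous_gen_closure (Z T : Type) (w : set Z -> set Z)
    (sb : set (set T)) (h : Z -> T) :
  cech_closure w ->
  (forall z S, sb S -> S (h z) -> cnear w z (h @^-1` S)) ->
  ccontinuous w (gen_closure sb) h.
Proof.
move=> hw near_sb B _ [z wBz <-] O openO Ohz.
have [F [finF Fsb FO OF]] := openO _ Ohz.
have [W ctW WF] :=
  cnear_all_finite hw finF (fun S FS => near_sb z S (Fsb S FS) (FO S FS)).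
have [b [Bb Wb]] := ccl_meet_cnbhd hw wBz ctW.
by exists (h b); split; [apply: OF => S FS; exact: WF b Wb S FS | exists b].
Qed.

Theorem theorem10 (X Y : Type) (u : set X -> set X) (v : set Y -> set Y)
  (calA : set (set X)) :
  cech_closure u -> cech_closure v ->
  (forall A, calA A -> ccompact u A) ->
  proper_topology X Y u v (Atop_closure X Y u v calA).
Proof.
move=> hu hv cptA Z w hw g cg.
have cg_section z : ccontinuous u v (fun x => g (z, x)).
  exact: ccontinuous_comp (ccontinuous_pair hw hu) cg.
exists (fun z => exist _ _ (cg_section z)); split => //.
apply: ccontinuous_gen_closure => // z _ [A [V [calA_A _ openV ->]]] /= gzAV.
have intV x : A x -> cinterior (prod_closure w u) (g @^-1` V) (z, x).
  by move=> Ax; apply: (ccontinuous_cinterior hv cg); rewrite /= -openV; apply/gzAV/imageP.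
have [W ctW WAV] := compact_tube hw (cptA A calA_A) intV.
by exists W => // b Wb _ [a Aa <-]; exact: WAV.
Qed.
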